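(* There exist a finite alphabet $\Sigma$ and a set $L\subseteq\mathcal{T}_\Sigma$ of infinite $\Sigma$-labeled binary trees recognized by a deterministic automaton such that $\mu(L)$ is an irrational number.
   Context: The full binary tree is $V=\{L,R\}^*$ (root $\epsilon$). A $\Sigma$-tree is a map $t:V\to\Sigma$, and $\mathcal{T}_\Sigma=\Sigma^V$. The coin-flipping measure $\mu$ on $\mathcal{T}_\Sigma$ is the product probability measure with $\mu(\{t : t(v_1)=a_1,\dots,t(v_k)=a_k\})=|\Sigma|^{-k}$ for pairwise distinct $v_i$. An alternating parity tree automaton is $\mathcal{A}=\langle\Sigma,Q,q_0,\delta,\pi\rangle$ with finite $Q$, $q_0\in Q$, $\pi:Q\to\omega$ and $\delta(q,a)$ a positive Boolean combination (using $\wedge,\vee$) of elements of $\{L,R\}\times Q$. A tree $t$ is accepted if player $\exists$ wins the game starting at $\langle\epsilon,q_0\rangle$ in which: from $\langle x,q\rangle$ the game moves to $\langle x,\delta(q,t(x))\rangle$; at a disjunction $\exists$ chooses a disjunct, at a conjunction $\forall$ chooses a conjunct; $\langle x,(D,q)\rangle$ moves to $\langle xD,q\rangle$ for $D\in\{L,R\}$; an infinite play is won by $\exists$ iff the largest priority $\pi(q)$ among states $q$ visited infinitely often (in positions $\langle x,q\rangle$) is even. A deterministic automaton is one in which every $\delta(q,a)$ has the form $(L,q_L)\wedge(R,q_R)$. *)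

From Stdlib Require Import Reals ZArith.
From mathcomp Require Import all_boot.

Set Implicit Arguments.
Unset Strict Implicit.
Unset Printing Implicit Defensive.

Inductive dir := dirL | dirR.
Definition vertex := seq dir.                 (* root = [::], child xD = rcons x D *)
Definition tree (Sigma : Type) := vertex -> Sigma.

Inductive pbf (Q : Type) :=
| Atom of dir & Q
| And of pbf Q & pbf Q
| Or of pbf Q & pbf Q.
Arguments Atom {Q}. Arguments And {Q}. Arguments Or {Q}.

Record automaton (Sigma Q : finType) := Automaton {
  init : Q;
  delta : Q -> Sigma -> pbf Q;
  pri : Q -> nat }.

Definition deterministic (Sigma Q : finType) (A : automaton Sigma Q) : Prop :=
  forall q a, exists qL qR, delta A q a = And (Atom dirL qL) (Atom dirR qR).

(* positions of the acceptance game *)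
Inductive pos (Q : Type) :=
| PState of vertex & Q
| PForm of vertex & pbf Q.
Arguments PState {Q}. Arguments PForm {Q}.

Definition move (Sigma Q : finType) (A : automaton Sigma Q) (t : tree Sigma)
    (p p' : pos Q) : Prop :=
  match p with
  | PState x q => p' = PForm x (delta A q (t x))
  | PForm x (Atom D q) => p' = PState (rcons x D) q
  | PForm x (And a b) => p' = PForm x a \/ p' = PForm x b
  | PForm x (Or a b) => p' = PForm x a \/ p' = PForm x b
  end.

(* history of the play up to (and including) step n *)
Definition hist (Q : Type) (p : nat -> pos Q) (n : nat) : seq (pos Q) :=
  map p (iota 0 n.+1).

(* strategies of player Exists: at a disjunction, given the history,
   choose the left (true) or right (false) disjunct *)
Definition strategy (Q : Type) := seq (pos Q) -> bool.

Definition consistent (Sigma Q : finType) (A : automaton Sigma Q)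
    (t : tree Sigma) (s : strategy Q) (p : nat -> pos Q) : Prop :=
  p 0 = PState [::] (init A) /\
  forall n, move A t (p n) (p n.+1) /\
    (forall x a b, p n = PForm x (Or a b) ->
        p n.+1 = PForm x (if s (hist p n) then a else b)).

Definition inf_often (Q : Type) (p : nat -> pos Q) (q : Q) : Prop :=
  forall N, exists n x, (N <= n)%N /\ p n = PState x q.

Definition winning (Sigma Q : finType) (A : automaton Sigma Q)
    (p : nat -> pos Q) : Prop :=
  exists q, inf_often p q /\ ~~ odd (pri A q) /\
    forall q', inf_often p q' -> (pri A q' <= pri A q)%N.

Definition accepts (Sigma Q : finType) (A : automaton Sigma Q)
    (t : tree Sigma) : Prop :=
  exists s : strategy Q, forall p, consistent A t s p -> winning A p.

Definition lang (Sigma Q : finType) (A : automaton Sigma Q) : tree Sigma -> Prop :=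
  fun t => accepts A t.

Open Scope R_scope.

(* basic cylinder: trees agreeing with f on all vertices of length < n
   (there are 2^n - 1 such vertices) *)
Definition cyl (Sigma : finType) (n : nat) (f : tree Sigma) : tree Sigma -> Prop :=
  fun t => forall v : vertex, (size v < n)%N -> t v = f v.

Definition cyl_weight (Sigma : finType) (n : nat) : R :=
  / (INR #|Sigma|) ^ (2 ^ n - 1)%nat.

Definition covers (Sigma : finType) (X : tree Sigma -> Prop)
    (ns : nat -> nat) (fs : nat -> tree Sigma) : Prop :=
  forall t, X t -> exists i, cyl (ns i) (fs i) t.

Fixpoint psum (Sigma : finType) (ns : nat -> nat) (N : nat) : R :=
  match N with
  | O => 0
  | S N' => psum Sigma ns N' + cyl_weight Sigma (ns N')
  end.

(* mu^*(X) = r : r is the infimum, over countable covers of X by basic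
   cylinders, of the total weight of the cover *)
Definition outer_measure_is (Sigma : finType) (X : tree Sigma -> Prop) (r : R)
    : Prop :=
  (forall ns fs, covers X ns fs ->
     forall r', r' < r -> exists N, r' < psum Sigma ns N) /\
  (forall eps, 0 < eps -> exists ns fs, covers X ns fs /\
     forall N, psum Sigma ns N <= r + eps).

(* X is measurable for the (completed) coin-flipping measure with mu(X) = r:
   outer measure of X is r and outer measure of its complement is 1 - r *)
Definition measure_is (Sigma : finType) (X : tree Sigma -> Prop) (r : R) : Prop :=
  outer_measure_is X r /\ outer_measure_is (fun t => ~ X t) (1 - r).

Definition irrational (r : R) : Prop :=
  ~ exists (p : Z) (q : positive), r = IZR p / IZR (Zpos q).

From Pilot Require Import Defs.
From HB Require Import structures.
From Stdlib Require Import Reals Lra Lia ClassicalEpsilon ClassicalDescription.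
From mathcomp Require Import all_boot zify.

(* The automaton reads labels in {None, Some true, Some false} and, along each
   branch, latches onto the first label other than None; it rejects as soon as
   that label is Some false.  Let y_m be the probability that no branch latches
   onto Some false within depth m.  Conditioning on the root label gives
   y_0 = 1 and y_(m+1) = (1 + y_m^2) / 3, so y_m decreases to the smaller
   fixed point rho = (3 - sqrt 5) / 2, an irrational root of x^2 - 3x + 1.
   The accepted set is the decreasing intersection of the depth-m safe sets,
   each a finite union of cylinders of total weight y_m, and its complement is
   the disjoint union of the sets where the first rejection happens at depth
   k + 1, of weight y_k - y_(k+1).  This gives covers of weight close to rho
   and to 1 - rho.  Conversely, compactness of the space of trees (Koenig's
   lemma) turns any cylinder cover of either set into a finite cover of some
   depth-m safe set or of its complement, of weight at least y_m >= rho,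
   respectively 1 - y_m. *)

HB.instance Definition _ := Monoid.isComLaw.Build R 0 Rplus
  (fun x y z => esym (Rplus_assoc x y z)) Rplus_comm Rplus_0_l.
HB.instance Definition _ := Monoid.isMulLaw.Build R 0 Rmult Rmult_0_l Rmult_0_r.
HB.instance Definition _ :=
  Monoid.isAddLaw.Build R Rmult Rplus Rmult_plus_distr_r Rmult_plus_distr_l.

Notation "\sum_ ( i <- r ) F" := (\big[Rplus/0]_(i <- r) F) : R_scope.
Notation "\sum_ ( m <= i < n ) F" := (\big[Rplus/0]_(m <= i < n) F) : R_scope.
Notation "\sum_ ( i < n ) F" := (\big[Rplus/0]_(i < n) F) : R_scope.
Notation "\sum_ ( i : t ) F" := (\big[Rplus/0]_(i : t) F) : R_scope.
Notation "\sum_ i F" := (\big[Rplus/0]_i F) : R_scope.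

Lemma le_sum {I : Type} (r : seq I) (F G : I -> R) :
  (forall i, F i <= G i) -> \sum_(i <- r) F i <= \sum_(i <- r) G i.
Proof. by move=> FG; apply: (big_ind2 Rle) => [|x x' y y' *|i _]; [lra | lra | exact: FG]. Qed.

Lemma sum_ge0 {I : Type} (r : seq I) (F : I -> R) :
  (forall i, 0 <= F i) -> 0 <= \sum_(i <- r) F i.
Proof. by move=> F0; apply: (big_ind (Rle 0)) => [|x y *|i _]; [lra | lra | exact: F0]. Qed.

Lemma le_sum_term {I : finType} (F : I -> R) i :
  (forall j, 0 <= F j) -> F i <= \sum_j F j.
Proof.
move=> F0; rewrite (bigD1 i) //=.
have : 0 <= \big[Rplus/0]_(j | j != i) F j.
  by apply: (big_ind (Rle 0)) => [|x y x0 y0|j _]; [lra | lra | exact: F0].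
lra.
Qed.

Lemma sum_cst (I : finType) (c : R) : \sum_(i : I) c = INR #|I| * c.
Proof.
rewrite big_const; elim: #|I| => [|n IHn]; first by rewrite /=; ring.
by rewrite iterS IHn S_INR; ring.
Qed.

Definition decP (P : Prop) : bool := if excluded_middle_informative P then true else false.

Lemma decPP (P : Prop) : reflect P (decP P).
Proof. by rewrite /decP; case: excluded_middle_informative => ?; constructor. Qed.

Definition ind (P : Prop) : R := if decP P then 1 else 0.

Lemma ind_ge0 (P : Prop) : 0 <= ind P.
Proof. rewrite /ind; case: decPP => _; lra. Qed.

Lemma ind_true {P : Prop} : P -> ind P = 1.
Proof. by rewrite /ind; case: decPP. Qed.

Lemma ind_false {P : Prop} : ~ P -> ind P = 0.
Proof. by rewrite /ind; case: decPP. Qed.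

Lemma eq_ind (P Q : Prop) : (P <-> Q) -> ind P = ind Q.
Proof. by rewrite /ind => PQ; case: decPP => p; case: decPP => q //; tauto. Qed.

Lemma ind_and (P Q : Prop) : ind (P /\ Q) = ind P * ind Q.
Proof. rewrite /ind; case: decPP => ?; case: decPP => ?; case: decPP => ?; try ring; tauto. Qed.

Lemma ind_not (P : Prop) : ind (~ P) = 1 - ind P.
Proof. rewrite /ind; case: decPP => ?; case: decPP => ?; try ring; tauto. Qed.

Lemma ind_diff (P Q : Prop) : (Q -> P) -> ind (P /\ ~ Q) = ind P - ind Q.
Proof.
by rewrite /ind => QP; case: decPP => ?; case: decPP => ?; case: decPP => ?; try ring; tauto.
Qed.

Lemma infinite_pigeonhole {X : finType} (g : nat -> X) {P : nat -> Prop} :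
  (forall M, exists m, (M <= m)%N /\ P m) ->
  exists x, forall M, exists m, (M <= m)%N /\ P m /\ g m = x.
Proof.
move=> infP; apply: NNPP => noX.
have [bound Hbound] : exists bound : X -> nat,
    forall x m, (bound x <= m)%N -> P m -> g m <> x.
  apply: (choice (fun x M => forall m, (M <= m)%N -> P m -> g m <> x)) => x.
  apply: NNPP => unbounded; apply: noX; exists x => M.
  apply: NNPP => noM; apply: unbounded; exists M => m Mm Pm gm.
  by apply: noM; exists m.
have [m [Mm Pm]] := infP (\max_x bound x).
by apply: (Hbound (g m) m) => //; exact: leq_trans (leq_bigmax (g m)) Mm.
Qed.

Section Cylinders.
Context {Sigma : finType} (a0 : Sigma).
Local Notation tree := (tree Sigma).

Definition subtree (D : dir) (t : tree) : tree := fun v => t (D :: v).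

Definition join (a : Sigma) (l r : tree) : tree := fun v =>
  match v with [::] => a | dirL :: v' => l v' | dirR :: v' => r v' end.

Fixpoint pattern (n : nat) : finType :=
  if n is n'.+1 then (Sigma * pattern n' * pattern n')%type : finType
  else unit : finType.

Fixpoint prefix (n : nat) (t : tree) : pattern n :=
  match n return pattern n with
  | 0 => tt
  | n'.+1 => (t [::], prefix n' (subtree dirL t), prefix n' (subtree dirR t))
  end.

Fixpoint pattern_tree (n : nat) : pattern n -> tree :=
  match n return pattern n -> tree with
  | 0 => fun _ _ => a0
  | n'.+1 => fun p => join p.1.1 (pattern_tree n' p.1.2) (pattern_tree n' p.2)
  end.
Arguments pattern_tree {n}.

Lemma cylS n (f t : tree) : cyl n.+1 f t <->
  [/\ t [::] = f [::], cyl n (subtree dirL f) (subtree dirL t)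
    & cyl n (subtree dirR f) (subtree dirR t)].
Proof.
split=> [ft | [root fl fr] [|[] v] vn //]; [|exact: fl|exact: fr].
by split=> [|v vn|v vn]; apply: ft.
Qed.

Lemma cyl_prefix n (f t : tree) : cyl n f t <-> prefix n t = prefix n f.
Proof.
elim: n f t => [|n IHn] f t; first by split=> // _ [].
rewrite cylS /=; split=> [[-> /IHn -> /IHn ->] // | [root pl pr]].
by split; [|apply/IHn|apply/IHn].
Qed.

Lemma prefix_pattern_tree {n} (p : pattern n) : prefix n (pattern_tree p) = p.
Proof.
elim: n p => [[] //|n IHn [[a l] r]].
by congr (_, _, _); apply: IHn.
Qed.

Lemma cyl_pattern_tree {n} {t : tree} : cyl n (pattern_tree (prefix n t)) t.
Proof. by rewrite cyl_prefix prefix_pattern_tree. Qed.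

Lemma cyl_sym {n} {f t : tree} : cyl n f t -> cyl n t f.
Proof. by rewrite !cyl_prefix. Qed.

Lemma cyl_trans {n} {f g t : tree} : cyl n f g -> cyl n g t -> cyl n f t.
Proof. by rewrite !cyl_prefix => -> ->. Qed.

Lemma cyl_le {m n} {f t : tree} : (n <= m)%N -> cyl m f t -> cyl n f t.
Proof. by move=> nm ft v vn; apply: ft; exact: leq_trans vn nm. Qed.

Lemma cyl_join {n a} {l l' r r' : tree} :
  cyl n l l' -> cyl n r r' -> cyl n.+1 (join a l r) (join a l' r').
Proof. by move=> ll rr; apply/cylS. Qed.

Lemma card_Sigma_gt0 : 0 < INR #|Sigma|.
Proof. by apply: lt_0_INR; apply/ltP/card_gt0P; exists a0. Qed.

Lemma cyl_weight0 : cyl_weight Sigma 0 = 1.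
Proof. exact: Rinv_1. Qed.

Lemma cyl_weightS n :
  cyl_weight Sigma n.+1 = / INR #|Sigma| * cyl_weight Sigma n * cyl_weight Sigma n.
Proof.
have card0 := card_Sigma_gt0.
rewrite /cyl_weight (_ : (2 ^ n.+1 - 1 = 1 + (2 ^ n - 1) + (2 ^ n - 1))%N).
  rewrite !pow_add pow_1; field; repeat split; try apply: pow_nonzero; lra.
by have := expn_gt0 2 n; rewrite expnS; lia.
Qed.

Lemma cyl_weight_gt0 n : 0 < cyl_weight Sigma n.
Proof. by apply/Rinv_0_lt_compat/pow_lt/card_Sigma_gt0. Qed.

Definition mean n (f : tree -> R) : R :=
  cyl_weight Sigma n * \sum_(p : pattern n) f (pattern_tree p).

Lemma mean0 (f : tree -> R) : mean 0 f = f (fun _ => a0).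
Proof. by rewrite /mean cyl_weight0 /= sum_cst card_unit /=; ring. Qed.

Lemma meanS n (f : tree -> R) : mean n.+1 f =
  / INR #|Sigma| * \sum_a mean n (fun l => mean n (fun r => f (join a l r))).
Proof.
have split3 : \sum_(p : pattern n.+1) f (pattern_tree p) =
    \sum_a \sum_(l : pattern n) \sum_(r : pattern n)
      f (join a (pattern_tree l) (pattern_tree r)).
  by rewrite (pair_bigA _ (fun a l => \sum_(r : pattern n) _)) pair_bigA.
rewrite /mean cyl_weightS split3 !big_distrr /=.
by apply: eq_bigr => a _; rewrite -big_distrr /=; ring.
Qed.

Lemma eq_mean n (f g : tree -> R) : (forall t, f t = g t) -> mean n f = mean n g.
Proof. by move=> fg; rewrite /mean; under eq_bigr do rewrite fg. Qed.

Lemma mean_cst n c : mean n (fun _ => c) = c.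
Proof.
elim: n => [|n IHn]; first by rewrite mean0.
rewrite meanS (eq_bigr (fun _ => c)) => [|a _]; last first.
  by under eq_mean do rewrite IHn; rewrite IHn.
by rewrite sum_cst; field; apply: Rgt_not_eq; exact: card_Sigma_gt0.
Qed.

Lemma le_mean {n} {f g : tree -> R} : (forall t, f t <= g t) -> mean n f <= mean n g.
Proof.
move=> fg; apply: Rmult_le_compat_l; first exact/Rlt_le/cyl_weight_gt0.
exact: le_sum.
Qed.

Lemma meanD n (f g : tree -> R) : mean n (fun t => f t + g t) = mean n f + mean n g.
Proof. by rewrite /mean big_split /=; ring. Qed.

Lemma meanZ n c (f : tree -> R) : mean n (fun t => c * f t) = c * mean n f.
Proof. by rewrite /mean -big_distrr /=; ring. Qed.

Lemma meanB n (f g : tree -> R) : mean n (fun t => f t - g t) = mean n f - mean n g.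
Proof.
under eq_mean do rewrite Rminus_def -(Rmult_1_l (g _)) Ropp_mult_distr_l.
by rewrite meanD meanZ; ring.
Qed.

Lemma mean_sum n N (F : nat -> tree -> R) :
  mean n (fun t => \sum_(i < N) F i t) = \sum_(i < N) mean n (F i).
Proof. by rewrite /mean exchange_big big_distrr. Qed.

Lemma mean_cyl n (f : tree) : mean n (fun t => ind (cyl n f t)) = cyl_weight Sigma n.
Proof.
rewrite /mean (bigD1 (prefix n f)) //= big1 => [|p pf].
  by rewrite ind_true; [ring | apply/cyl_prefix; rewrite prefix_pattern_tree].
apply: ind_false => /cyl_prefix; rewrite prefix_pattern_tree => pf'.
by move: pf; rewrite pf' eqxx.
Qed.

Definition determined n (f : tree -> R) := forall t s, cyl n s t -> f t = f s.

Lemma mean_succ n (f : tree -> R) : determined n f -> mean n.+1 f = mean n f.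
Proof.
elim: n f => [|n IHn] f fn.
  rewrite meanS mean0 (eq_bigr (fun _ => f (fun _ => a0))) => [|a _].
    by rewrite sum_cst; field; apply: Rgt_not_eq; exact: card_Sigma_gt0.
  by rewrite !mean0; apply: fn.
rewrite !meanS; congr (_ * _); apply: eq_bigr => a _.
have inner l : mean n.+1 (fun r => f (join a l r)) = mean n (fun r => f (join a l r)).
  by apply: IHn => r r' rr; apply: fn; apply: cyl_join.
under eq_mean do rewrite inner; apply: IHn => l l' ll; apply: eq_mean => r.
by apply: fn; apply: cyl_join.
Qed.

Lemma determined_ind {n} {P : tree -> Prop} :
  (forall t s, cyl n s t -> P t -> P s) -> determined n (fun t => ind (P t)).
Proof. by move=> Pdet t s st; apply: eq_ind; split; apply: Pdet => //; apply: cyl_sym. Qed.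

Lemma mean_determined {n m} {f : tree -> R} :
  determined n f -> (n <= m)%N -> mean m f = mean n f.
Proof.
move=> fn; elim: m => [|m IHm]; first by rewrite leqn0 => /eqP ->.
rewrite leq_eqVlt => /orP [/eqP <- // | nm].
rewrite mean_succ ?IHm // => t s st; apply: fn; exact: cyl_le st.
Qed.

Lemma cluster_point (ts : nat -> tree) :
  exists t, forall n M, exists m, (M <= m)%N /\ cyl n t (ts m).
Proof.
pose often n f := forall M, exists m, (M <= m)%N /\ cyl n f (ts m).
have extend n f : often n f -> exists f', often n.+1 f' /\ cyl n f f'.
  move=> fn; have [x Hx] := infinite_pigeonhole (fun m => prefix n.+1 (ts m)) fn.
  exists (pattern_tree x); split=> [M | ].
    by have [m [Mm [_ <-]]] := Hx M; exists m; split; last exact: cyl_pattern_tree.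
  have [m [_ [fm <-]]] := Hx 0%N.
  exact: cyl_trans fm (cyl_le (leqnSn n) (cyl_sym (@cyl_pattern_tree n.+1 (ts m)))).
have [next Hnext] : exists next : nat * tree -> tree, forall nf,
    often nf.1 nf.2 -> often nf.1.+1 (next nf) /\ cyl nf.1 nf.2 (next nf).
  apply: (choice (fun nf f' => often nf.1 nf.2 -> often nf.1.+1 f' /\ cyl nf.1 nf.2 f')).
  move=> [n f]; have [fn | nfn] := classic (often n f).
    by have [f' Hf'] := extend n f fn; exists f'.
  by exists f.
pose P := fix P k := if k is k'.+1 then next (k', P k') else fun _ : vertex => a0.
have oftenP k : often k (P k).
  by elim: k => [|k IHk] M; [exists M | exact: (proj1 (Hnext (k, P k) IHk))].
have chain k j : (k <= j)%N -> cyl k (P k) (P j).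
  elim: j => [|j IHj]; first by rewrite leqn0 => /eqP ->.
  rewrite leq_eqVlt ltnS => /orP [/eqP -> // | kj].
  exact: cyl_trans (IHj kj) (cyl_le kj (proj2 (Hnext (j, P j) (oftenP j)))).
exists (fun v => P (size v).+1 v) => n M.
have [m [Mm Pm]] := oftenP n M; exists m; split=> // v vn.
by rewrite Pm // (chain (size v).+1 n vn).
Qed.

Lemma finite_subcover (K : nat -> tree -> Prop) (d : nat -> nat) ns fs :
  (forall j m t, (j <= m)%N -> K m t -> K j t) ->
  (forall j t s, cyl (d j) s t -> K j t -> K j s) ->
  covers (fun t => forall j, K j t) ns fs ->
  exists j N, forall t, K j t -> exists i, (i < N)%N /\ cyl (ns i) (fs i) t.
Proof.
move=> Kanti Kdet cover; apply: NNPP => noSubcover.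
have [ts Hts] : exists ts : nat -> tree, forall m,
    K m (ts m) /\ forall i, (i < m)%N -> ~ cyl (ns i) (fs i) (ts m).
  apply: (choice (fun m t => K m t /\ forall i, (i < m)%N -> ~ cyl (ns i) (fs i) t)).
  move=> m; apply: NNPP => allCovered; apply: noSubcover; exists m, m => t Kt.
  apply: NNPP => tUncovered; apply: allCovered; exists t; split=> // i im ti.
  by apply: tUncovered; exists i.
have [tl tlCluster] := cluster_point ts.
have [i tli] : exists i, cyl (ns i) (fs i) tl.
  apply: cover => j; have [m [jm tlm]] := tlCluster (d j) j.
  exact: Kdet tlm (Kanti j m _ jm (proj1 (Hts m))).
have [m [im tlm]] := tlCluster (ns i) i.+1.
exact: (proj2 (Hts m)) i im (cyl_trans tli tlm).
Qed.

Lemma psumE ns N : psum Sigma ns N = \sum_(i < N) cyl_weight Sigma (ns i).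
Proof. by elim: N => [|N IHN]; rewrite ?big_ord0 // big_ord_recr /= IHN. Qed.

Lemma cover_weight_ge (K : nat -> tree -> Prop) (d : nat -> nat) ns fs :
  (forall j m t, (j <= m)%N -> K m t -> K j t) ->
  (forall j t s, cyl (d j) s t -> K j t -> K j s) ->
  covers (fun t => forall j, K j t) ns fs ->
  exists j N, mean (d j) (fun t => ind (K j t)) <= psum Sigma ns N.
Proof.
move=> Kanti Kdet cover.
have [j [N subcover]] := finite_subcover K d ns fs Kanti Kdet cover.
exists j, N; pose D := maxn (d j) (\max_(i < N) ns i).
have nsD (i : 'I_N) : (ns i <= D)%N.
  by rewrite leq_max (leq_bigmax (F := fun i : 'I_N => ns i) i) orbT.
rewrite -(mean_determined (determined_ind (Kdet j)) (leq_maxl _ (\max_(i < N) ns i))) -/D.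
pose covering t := \sum_(i < N) ind (cyl (ns i) (fs i) t).
apply: Rle_trans (le_mean (g := covering) _) _.
  move=> t; have [Kt | nKt] := classic (K j t).
    have [i [iN ti]] := subcover t Kt; rewrite ind_true // -(ind_true ti).
    apply: (le_sum_term (fun i : 'I_N => ind (cyl (ns i) (fs i) t)) (Ordinal iN)).
    by move=> k; apply: ind_ge0.
  by rewrite ind_false //; apply: sum_ge0 => i; apply: ind_ge0.
rewrite (mean_sum _ _ (fun i t => ind (cyl (ns i) (fs i) t))) psumE.
apply: Req_le; apply: eq_bigr => i _; rewrite (mean_determined _ (nsD i)) ?mean_cyl //.
by apply: determined_ind => t s st ft; apply: cyl_trans ft (cyl_sym st).
Qed.

Definition weight (l : seq (nat * tree)) : R := \sum_(c <- l) cyl_weight Sigma c.1.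

Definition covered_by (l : seq (nat * tree)) (t : tree) : bool :=
  has (fun c => decP (cyl c.1 c.2 t)) l.

Definition cylinders n (P : tree -> Prop) : seq (nat * tree) :=
  [seq (n, pattern_tree p) | p <- enum (pattern n) & decP (P (pattern_tree p))].

Lemma weight_cylinders n (P : tree -> Prop) :
  weight (cylinders n P) = mean n (fun t => ind (P t)).
Proof.
rewrite /weight big_map big_filter /mean big_distrr big_mkcond enumT /=.
by apply: eq_bigr => p _; rewrite /ind; case: decP; ring.
Qed.

Lemma covered_by_cylinders n (P : tree -> Prop) t :
  (forall t s, cyl n s t -> P t -> P s) -> P t -> covered_by (cylinders n P) t.
Proof.
move=> Pdet Pt; rewrite /covered_by has_map; apply/hasP; exists (prefix n t).
  by rewrite mem_filter mem_enum andbT; apply/decPP; apply: Pdet Pt; exact: cyl_pattern_tree.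
by apply/decPP; exact: cyl_pattern_tree.
Qed.

Lemma covered_by_size {l} {t : tree} : covered_by l t -> (0 < size l)%N.
Proof. by case: l. Qed.

Lemma cover_by_lists (X : tree -> Prop) (LL : nat -> seq (nat * tree)) :
  (forall k, (0 < size (LL k))%N) ->
  (forall t, X t -> exists k, covered_by (LL k) t) ->
  exists ns fs, covers X ns fs /\
    forall N, psum Sigma ns N <= \sum_(k < N) weight (LL k).
Proof.
move=> LLne XLL; pose c0 := (0%N, fun _ : vertex => a0).
pose flat N := flatten [seq LL k | k <- index_iota 0 N].
have flat_cat a b : (a <= b)%N ->
    flat b = flat a ++ flatten [seq LL k | k <- index_iota a b].
  by move=> ab; rewrite /flat /index_iota !subn0 -{1}(subnKC ab) iotaD map_cat flatten_cat.
have size_flat N : (N <= size (flat N))%N.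
  elim: N => [|N IHN] //; rewrite (flat_cat N N.+1) // size_cat /index_iota subSnn /= cats0.
  by have := LLne N; lia.
have nth_flat i a b :
    (i < size (flat a))%N -> (a <= b)%N -> nth c0 (flat b) i = nth c0 (flat a) i.
  by move=> ia ab; rewrite (flat_cat a b) // nth_cat ia.
pose F i := nth c0 (flat i.+1) i.
exists (fun i => (F i).1), (fun i => (F i).2); split=> [t Xt | N].
  have [k tk] := XLL t Xt.
  have : has (fun c => decP (cyl c.1 c.2 t)) (flat k.+1).
    by rewrite (flat_cat k k.+1) // has_cat /index_iota subSnn /= cats0; apply/orP; right.
  case/(has_nthP c0) => i ik /decPP tc; exists i.
  rewrite /F -(nth_flat i i.+1 (maxn i.+1 k.+1)) ?leq_maxl ?(size_flat i.+1) //.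
  by rewrite (nth_flat i k.+1 (maxn i.+1 k.+1)) ?leq_maxr.
have -> : \sum_(k < N) weight (LL k) = weight (flat N).
  by rewrite /weight big_flatten big_map big_mkord.
rewrite psumE /weight (big_nth c0) (big_cat_nat (leq0n N) (size_flat N)) /= big_mkord.
have F_flat (i : 'I_N) : F i = nth c0 (flat N) i.
  by rewrite /F (nth_flat i i.+1 N (size_flat i.+1) (ltn_ord i)).
under eq_bigr do rewrite F_flat.
rewrite -[X in X <= _]Rplus_0_r; apply: Rplus_le_compat; first exact: Rle_refl.
by apply: sum_ge0 => i; apply/Rlt_le/cyl_weight_gt0.
Qed.

Lemma cyl_weight_le_half n : (1 < #|Sigma|)%N -> cyl_weight Sigma n <= (1/2) ^ n.
Proof.
move=> card2; have c2 : 2 <= INR #|Sigma|.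
  by apply: (Rle_trans _ (INR 2)); [rewrite /=; lra | apply/le_INR/leP].
have ic0 : 0 < / INR #|Sigma| by apply: Rinv_0_lt_compat; lra.
have ic2 : / INR #|Sigma| <= / 2 by apply: Rinv_le_contravar; lra.
suff : cyl_weight Sigma n <= (1/2) ^ n <= 1 by case.
elim: n => [|n IHn]; first by rewrite cyl_weight0 /=; lra.
have := cyl_weight_gt0 n; rewrite cyl_weightS -tech_pow_Rmult; nra.
Qed.

End Cylinders.

Lemma sum_option_bool (F : option bool -> R) :
  \sum_a F a = F None + F (Some true) + F (Some false).
Proof.
rewrite (bigD1 None) // (bigD1 (Some true)) // (bigD1 (Some false)) // big_pred0.
  by rewrite /=; ring.
by case=> [[]|].
Qed.

Local Notation btree := (tree (option bool)).

(* [None] means that no decisive label has been read yet; a state [Some b]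
   remembers the first decisive label [b] forever. *)
Definition latch (q a : option bool) : option bool := if q is Some _ then q else a.

Definition latch_delta (q a : option bool) : pbf (option bool) :=
  And (Atom dirL (latch q a)) (Atom dirR (latch q a)).

Definition latch_pri (q : option bool) : nat := if q is Some false then 1 else 0.

Definition latch_aut : automaton (option bool) (option bool) :=
  @Automaton _ _ None latch_delta latch_pri.

Lemma latch_aut_deterministic : deterministic latch_aut.
Proof. by move=> q a; exists (latch q a), (latch q a). Qed.

Fixpoint run_from (q : option bool) (t : btree) (v : vertex) : option bool :=
  if v is D :: v' then run_from (latch q (t [::])) (subtree D t) v' else q.

Definition run (t : btree) (v : vertex) : option bool := run_from None t v.

Lemma run_from_rcons q t x D : run_from q t (rcons x D) = latch (run_from q t x) (t x).
Proof. by elim: x q t => [|D' x IHx] q t //=. Qed.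

Lemma run_from_Some b t v : run_from (Some b) t v = Some b.
Proof. by elim: v t => [|D v IHv] t //=. Qed.

Lemma run_from_cyl q (t s : btree) v : cyl (size v) s t -> run_from q t v = run_from q s v.
Proof.
elim: v q t s => [|D v IHv] q t s //= st.
by rewrite (st [::]) //; apply: IHv => u uv; apply: (st (D :: u)).
Qed.

Lemma run_from_None_tree (t : btree) v :
  (forall u : vertex, (size u < size v)%N -> t u = None) -> run_from None t v = None.
Proof.
elim: v t => [|D v IHv] t tNone //=.
by rewrite (tNone [::]) //=; apply: IHv => u uv; apply: (tNone (D :: u)).
Qed.

Section Plays.
Context {t : btree} {p : nat -> Defs.pos (option bool)}.
Hypotheses (p0 : p 0 = PState [::] None)
  (p_moves : forall n, move latch_aut t (p n) (p n.+1)).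

Definition coherent (z : Defs.pos (option bool)) : Prop :=
  match z with
  | PState x q => q = run t x
  | PForm x phi => phi = latch_delta (run t x) (t x) \/
      exists D, phi = Atom D (latch (run t x) (t x))
  end.

Lemma play_coherent n : coherent (p n).
Proof.
elim: n => [|n IHn]; first by rewrite p0.
move: (p_moves n) IHn; case: (p n) => [x q | x phi] /= pn.
  by rewrite pn => ->; left.
case=> [phiE | [D phiE]]; rewrite phiE /= in pn.
  by case: pn => ->; right; [exists dirL | exists dirR].
by rewrite pn /= /run run_from_rcons.
Qed.

Lemma play_states_often M : exists m, (M <= m)%N /\ exists x q, p m = PState x q.
Proof.
have := play_coherent M; have := p_moves M; have := p_moves M.+1.
case E: (p M) => [x q | x phi] /= step2 step1 => [_ | ].
  by exists M; split=> //; exists x, q.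
case=> [phiE | [D phiE]]; rewrite phiE /= in step1.
  by case: step1 => step1; rewrite step1 /= in step2;
    exists M.+2; (split; first lia); do 2 eexists; exact: step2.
by exists M.+1; split; [lia | do 2 eexists; exact: step1].
Qed.

End Plays.

Lemma no_rejection_accepted t : (forall x, run t x <> Some false) -> lang latch_aut t.
Proof.
move=> no_rejection; exists (fun _ => true) => p [p0 p_cons].
have p_moves n : move latch_aut t (p n) (p n.+1) by case: (p_cons n).
have never_rejects q : inf_often p q -> q <> Some false.
  move=> qoften; have [m [y [_ pm]]] := qoften 0%N.
  by have := play_coherent p0 p_moves m; rewrite pm /= => ->.
pose state m := if p m is PState _ q then q else None.
have [q qoften] := infinite_pigeonhole state (play_states_often p0 p_moves).
have {}qoften : inf_often p q.
  move=> M; have [m [Mm [[y [q' pm]] qm]]] := qoften M.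
  by exists m, y; rewrite pm -qm /state pm.
exists q; split=> //; split=> [|q' /never_rejects].
  by case: q qoften => [[]|] // /never_rejects.
by case: q' => [[]|].
Qed.

Section PathPlay.
Variables (t : btree) (x : vertex).

(* The universal player follows [x] and then goes left forever. *)
Definition path_dir (k : nat) : dir := nth dirL x k.

Definition toward_x (z : Defs.pos (option bool)) : Defs.pos (option bool) :=
  match z with
  | PState y q => PForm y (latch_delta q (t y))
  | PForm y (And a b) => PForm y (if path_dir (size y) is dirL then a else b)
  | PForm y (Or a _) => PForm y a
  | PForm y (Atom D q) => PState (rcons y D) q
  end.

Definition path_play (n : nat) : Defs.pos (option bool) :=
  iter n toward_x (PState [::] None).

Lemma path_play_moves n : move latch_aut t (path_play n) (path_play n.+1).
Proof.
rewrite [path_play n.+1]iterS -/(path_play n).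
case: (path_play n) => [y q | y [D q | a b | a b]] //=; try by left.
by case: path_dir; [left | right].
Qed.

Lemma path_play_states k :
  path_play (3 * k) = PState (mkseq path_dir k) (run t (mkseq path_dir k)).
Proof.
elim: k => [|k IHk] //; rewrite mulnS /path_play !iterS -/(path_play (3 * k)) IHk /=.
by rewrite size_mkseq mkseqS /run run_from_rcons; case: path_dir.
Qed.

End PathPlay.

Lemma rejection_not_accepted t x : run t x = Some false -> ~ lang latch_aut t.
Proof.
move=> tx [s win].
have rejecting k : (size x <= k)%N -> run t (mkseq (path_dir x) k) = Some false.
  elim: k => [|k IHk]; first by rewrite leqn0 => /eqP/size0nil x0; rewrite -tx x0.
  rewrite leq_eqVlt => /orP [/eqP <- | xk]; first by rewrite /path_dir mkseq_nth.
  by rewrite mkseqS /run run_from_rcons -/(run _ _) IHk.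
have consistent_path : consistent latch_aut t s (path_play t x).
  split=> // n; split=> [|y a b pn]; first exact: path_play_moves.
  have := play_coherent (erefl _) (path_play_moves t x) n.
  by rewrite pn => -[|[]].
have [q [_ [qeven qmax]]] := win _ consistent_path.
have often_false : inf_often (path_play t x) (Some false).
  move=> N; exists (3 * (N + size x))%N, (mkseq (path_dir x) (N + size x)).
  by rewrite path_play_states rejecting ?leq_addl //; split=> //; lia.
by move: (qmax _ often_false) qeven; case: q {qmax} => [[]|].
Qed.

Lemma lang_latch t : lang latch_aut t <-> forall x, run t x <> Some false.
Proof.
split=> [tL x tx | ]; [exact: rejection_not_accepted tx tL | exact: no_rejection_accepted].
Qed.

Definition safe (m : nat) (t : btree) : Prop :=
  forall v : vertex, (size v <= m)%N -> run t v <> Some false.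

Lemma safe_le j m t : (j <= m)%N -> safe m t -> safe j t.
Proof. by move=> jm tm v vj; apply: tm; exact: leq_trans vj jm. Qed.

Lemma safe_cyl m (t s : btree) : cyl m s t -> safe m t -> safe m s.
Proof.
move=> st tm v vm; rewrite /run -(@run_from_cyl None t s v); first exact: tm.
by move=> u uv; apply: st; exact: leq_trans uv vm.
Qed.

Lemma lang_safe t : lang latch_aut t <-> forall m, safe m t.
Proof.
rewrite lang_latch; split=> [tsafe m v _ | tsafe v]; first exact: tsafe.
exact: (tsafe (size v) v (leqnn _)).
Qed.

Lemma safe_join m a (l r : btree) :
  safe m.+1 (join a l r) <-> a = Some true \/ [/\ a = None, safe m l & safe m r].
Proof.
split=> [lr | [-> | [-> lm rm]] [|[] v] //= vm]; rewrite /run /=.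
- case: a lr => [[] | ] lr; [by left | | right; split=> // v vm].
  + by have := lr [:: dirL]; rewrite /run /=; case.
  + exact: (lr (dirL :: v)).
  + exact: (lr (dirR :: v)).
- by rewrite run_from_Some.
- by rewrite run_from_Some.
- exact: lm.
- exact: rm.
Qed.

Definition safe_prob (m : nat) : R := mean None m (fun t => ind (safe m t)).

Lemma card_option_bool : INR #|(option bool : finType)| = 3.
Proof. by rewrite card_option card_bool /=; ring. Qed.

Lemma safe_prob0 : safe_prob 0 = 1.
Proof. by rewrite /safe_prob mean0 ind_true // => -[|D v]. Qed.

Lemma safe_probS m : safe_prob m.+1 = / 3 * (safe_prob m * safe_prob m + 1).
Proof.
rewrite {1}/safe_prob meanS card_option_bool sum_option_bool.
have undecided : mean None m (fun l => mean None m (fun r => ind (safe m.+1 (join None l r))))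
    = safe_prob m * safe_prob m.
  rewrite -meanZ; apply: eq_mean => l; rewrite Rmult_comm -meanZ; apply: eq_mean => r.
  rewrite -ind_and; apply: eq_ind; rewrite safe_join.
  by split=> [[// | [_ lm rm]] | [lm rm]]; [split | right].
have decided b : mean None m (fun l => mean None m (fun r =>
    ind (safe m.+1 (join (Some b) l r)))) = if b then 1 else 0.
  rewrite -[RHS](mean_cst (None : option bool) m); apply: eq_mean => l.
  rewrite -[RHS](mean_cst (None : option bool) m); apply: eq_mean => r.
  case: b; [rewrite ind_true | rewrite ind_false] => //; rewrite safe_join; first by left.
  by case=> [|[]].
by rewrite undecided !decided; field.
Qed.

Definition rho : R := (3 - sqrt 5) / 2.

Lemma rho_root : rho * rho - 3 * rho + 1 = 0.
Proof. have := sqrt_sqrt 5; rewrite /rho; nra. Qed.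

Lemma rho_bounds : 0 < rho < 1/2.
Proof.
have := sqrt_sqrt 5; have := sqrt_pos 5; rewrite /rho; split; nra.
Qed.

Lemma safe_prob_bounds m : rho <= safe_prob m <= 1 /\ safe_prob m - rho <= (1/2) ^ m.
Proof.
have := rho_root; have := rho_bounds.
elim: m => [|m IHm] *; first by rewrite safe_prob0 /=; lra.
rewrite safe_probS /=; nra.
Qed.

Lemma half_pow_small eps : 0 < eps -> exists M, (1/2) ^ M < eps.
Proof.
move=> eps0; have [M small] := pow_lt_1_zero (1/2) ltac:(rewrite Rabs_pos_eq; lra) eps eps0.
by exists M; have := small M (Nat.le_refl M); rewrite Rabs_pos_eq //; apply: pow_le; lra.
Qed.

Lemma safe_prob_near_rho eps : 0 < eps -> exists m, safe_prob m < rho + eps.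
Proof.
move=> /half_pow_small [m small]; exists m.
by have [_ close] := safe_prob_bounds m; lra.
Qed.

(* Infinite descent: by parity, a solution has [p] and [q] even, and halving
   both gives a solution with smaller [q]. *)
Lemma no_integer_root n (p q : Z) :
  (0 < q <= Z.of_nat n)%Z -> (p * p - 3 * p * q + q * q <> 0)%Z.
Proof.
elim: n p q => [|n IHn] p q; first lia.
have [[p' ->] | [p' ->]] := Z.Even_or_Odd p; have [[q' ->] | [q' ->]] := Z.Even_or_Odd q;
  move=> qn root; first [by apply: (IHn p' q'); nia | by ring_simplify in root; lia].
Qed.

Lemma rho_irrational : irrational rho.
Proof.
move=> [p [q rhoE]]; apply: (no_integer_root (Pos.to_nat q) p (Z.pos q)); first lia.
apply: eq_IZR; rewrite plus_IZR minus_IZR !mult_IZR.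
have q0 : IZR (Z.pos q) <> 0 by apply: not_0_IZR.
have := rho_root; rewrite rhoE => root.
set x := IZR p; set y := IZR (Z.pos q).
rewrite (_ : x * x - 3 * x * y + y * y = y * y * (x / y * (x / y) - 3 * (x / y) + 1)).
  by rewrite root; ring.
by field.
Qed.

Lemma sum_half_pow M N : \sum_(k < N) (1/2) ^ (M + k.+1) = (1/2) ^ M - (1/2) ^ (M + N).
Proof.
elim: N => [|N IHN]; first by rewrite big_ord0 addn0 Rminus_diag.
rewrite big_ord_recr IHN addnS -tech_pow_Rmult /=.
by move: ((1/2) ^ M) ((1/2) ^ (M + N)) => a b; field.
Qed.

Lemma lang_cover_ge ns fs : covers (lang latch_aut) ns fs ->
  forall r, r < rho -> exists N, r < psum (option bool : finType) ns N.
Proof.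
move=> cover r r_rho.
have [j [N jN]] := cover_weight_ge None safe id ns fs safe_le safe_cyl
  (fun t tsafe => cover t (proj2 (lang_safe t) tsafe)).
exists N; apply: Rlt_le_trans jN; apply: Rlt_le_trans r_rho _.
by have [[rho_j _] _] := safe_prob_bounds j.
Qed.

Lemma safe_undecided m : safe m (fun _ => None).
Proof. by move=> v _; rewrite /run run_from_None_tree. Qed.

Lemma lang_cover_le eps : 0 < eps -> exists ns fs, covers (lang latch_aut) ns fs /\
  forall N, psum (option bool : finType) ns N <= rho + eps.
Proof.
move=> eps0; have [m m_near] := safe_prob_near_rho (eps / 2) ltac:(lra).
have [M M_small] := half_pow_small (eps / 2) ltac:(lra).
pose LL k := if k is _.+1 then [:: ((M + k)%N, fun _ : vertex => None)]
             else cylinders None m (safe m).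
have safe_cylinders t : safe m t -> covered_by (LL 0%N) t.
  by apply: covered_by_cylinders; exact: safe_cyl.
have [|t tL|ns [fs [cover bound]]] := cover_by_lists None (lang latch_aut) LL.
- by case=> [|k] //; apply: covered_by_size (safe_cylinders _ (safe_undecided m)).
- by exists 0%N; apply: safe_cylinders; exact: (proj1 (lang_safe t) tL m).
exists ns, fs; split=> // N; apply: Rle_trans (bound N) _.
have [[rho_m _] _] := safe_prob_bounds m; have [rho0 _] := rho_bounds.
case: N => [|N]; first by rewrite big_ord0; lra.
have head : weight (LL 0%N) = safe_prob m := weight_cylinders None m (safe m).
have card3 : (1 < #|(option bool : finType)|)%N by rewrite card_option card_bool.
have padding : \sum_(i < N) weight (LL (lift ord0 i)) <= (1/2) ^ M.
  apply: (Rle_trans _ (\sum_(i < N) (1/2) ^ (M + i.+1))).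
    apply: le_sum => i; rewrite lift0 /weight big_seq1.
    exact: (cyl_weight_le_half None (M + i.+1) card3).
  have tail_ge0 : 0 <= (1/2) ^ (M + N) by apply: pow_le; lra.
  by rewrite sum_half_pow; lra.
rewrite big_ord_recl head; lra.
Qed.

Lemma compl_cover_ge ns fs : covers (fun t => ~ lang latch_aut t) ns fs ->
  forall r, r < 1 - rho -> exists N, r < psum (option bool : finType) ns N.
Proof.
move=> cover r r_rho; have [m m_near] := safe_prob_near_rho (1 - rho - r) ltac:(lra).
have [_ [N mN]] := cover_weight_ge None (fun _ t => ~ safe m t) (fun _ => m) ns fs
  (fun _ _ _ _ => id) (fun _ t s st tm sm => tm (safe_cyl m s t (cyl_sym st) sm))
  (fun t tm => cover t (fun tL => tm 0%N (proj1 (lang_safe t) tL m))).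
exists N; apply: Rlt_le_trans mN.
under eq_mean do rewrite ind_not.
by rewrite meanB mean_cst -/(safe_prob m); lra.
Qed.

Definition first_unsafe (k : nat) (t : btree) : Prop := safe k t /\ ~ safe k.+1 t.

Lemma first_unsafe_exists t : ~ lang latch_aut t -> exists k, first_unsafe k t.
Proof.
rewrite lang_safe => unsafe; have [m tm] := not_all_ex_not _ _ unsafe.
elim: m tm => [|m IHm] tm; first by case: tm => -[|D v].
by have [tm' | tm'] := classic (safe m t); [exists m | exact: IHm].
Qed.

Lemma first_unsafe_cyl k (t s : btree) : cyl k.+1 s t -> first_unsafe k t -> first_unsafe k s.
Proof.
move=> st [tk tk1]; split; first exact: safe_cyl k t s (cyl_le (leqnSn k) st) tk.
by move=> sk1; apply: tk1; exact: safe_cyl k.+1 s t (cyl_sym st) sk1.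
Qed.

Lemma mean_first_unsafe k :
  mean None k.+1 (fun t => ind (first_unsafe k t)) = safe_prob k - safe_prob k.+1.
Proof.
rewrite (eq_mean None k.+1 _ (fun t => ind (safe k t) - ind (safe k.+1 t))); last first.
  by move=> t; apply: ind_diff; exact: safe_le k k.+1 t (leqnSn k).
by rewrite meanB (mean_determined None (determined_ind (safe_cyl k)) (leqnSn k)).
Qed.

Lemma compl_cover_le eps : 0 < eps -> exists ns fs,
  covers (fun t => ~ lang latch_aut t) ns fs /\
  forall N, psum (option bool : finType) ns N <= 1 - rho + eps.
Proof.
move=> eps0; pose LL k := cylinders None k.+1 (first_unsafe k).
have first_unsafe_covered k t : first_unsafe k t -> covered_by (LL k) t.
  by apply: covered_by_cylinders; exact: first_unsafe_cyl.
have [k|t tL|ns [fs [cover bound]]] := cover_by_lists None (fun t => ~ lang latch_aut t) LL.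
- pose reject_at_k : btree := fun v => if (size v < k)%N then None else Some false.
  apply: (covered_by_size (t := reject_at_k)); apply: first_unsafe_covered; split.
    move=> v vk; rewrite /run run_from_None_tree // => u uv.
    by rewrite /reject_at_k (leq_trans uv vk).
  move=> safe_k1; apply: (safe_k1 (rcons (nseq k dirL) dirL)).
    by rewrite size_rcons size_nseq.
  rewrite /run run_from_rcons run_from_None_tree => [|u]; rewrite /reject_at_k size_nseq ?ltnn //.
  by move=> ->.
- by have [k tk] := first_unsafe_exists t tL; exists k; apply: first_unsafe_covered.
exists ns, fs; split=> // N; apply: Rle_trans (bound N) _.
have telescope : \sum_(k < N) weight (LL k) = 1 - safe_prob N.
  elim: N {bound} => [|N IHN]; first by rewrite big_ord0 safe_prob0; ring.
  by rewrite big_ord_recr /= IHN /LL weight_cylinders mean_first_unsafe; ring.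
by rewrite telescope; have [[rho_N _] _] := safe_prob_bounds N; lra.
Qed.

Lemma lang_measure : measure_is (lang latch_aut) rho.
Proof.
split; split.
- exact: lang_cover_ge.
- exact: lang_cover_le.
- exact: compl_cover_ge.
- exact: compl_cover_le.
Qed.

Theorem proposition1 :
  exists (Sigma Q : finType) (A : automaton Sigma Q),
    deterministic A /\
    exists r : R, measure_is (lang A) r /\ irrational r.
Proof.
exists (option bool : finType), (option bool : finType), latch_aut.
split; first exact: latch_aut_deterministic.
by exists rho; split; [exact: lang_measure | exact: rho_irrational].
Qed.
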